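(* Define $\tau_{k} = \{T \mid T \subseteq \Omega, |T| = k \in \mathbb{N} \}$ and let $\mathcal{B}_m$ denote any set of binary strings, such that the strings are of length $m$ or less. Let \[ R = \{(T, F) \mid T \in \tau_{k}, F \in \mathcal{B}_m \}, \quad R_{q_{\text{min}}} = \{(T, F) \mid T \in \tau_{k}, F \in \mathcal{B}_m, \phi(T,F) \geq q_{\text{min}} \}, \] where $\phi(T,F)$ is the decomposable probability-of-success metric for algorithm $\mathcal{A}$ on problem $(\Omega, T, F)$. Then for any $m \in \mathbb{N}$, \[ \frac{|R_{q_{\text{min}}}|}{|R|} \leq \frac{p}{q_{\text{min}}}, \] where $p = k/|\Omega|$.
   Context: Algorithmic search framework: finite discrete search space $\Omega$, target sets $T\subseteq\Omega$ with indicator vectors $\mathbf{t}$, information resources $F$ (here binary strings), and a fixed search algorithm $\mathcal{A}$. A probability-of-success metric $\phi$ is decomposable if there exists a probability vector $\mathbf{P}_{\phi,f}$ over $\Omega$, not a function of the target, with $\phi(t,f)=\mathbf{t}^{\top}\mathbf{P}_{\phi,f}=P_\phi(X\in t\mid f)$. $q_{\text{min}}\in(0,1]$ is a success threshold. *)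

From HB Require Import structures.
From mathcomp Require Import all_boot all_order all_algebra.
Set Implicit Arguments. Unset Strict Implicit. Unset Printing Implicit Defensive.
Import Order.TTheory GRing.Theory Num.Theory.
Local Open Scope ring_scope.

Definition bitstring := seq bool.

Definition tau (Omega : finType) (k : nat) : {set {set Omega}} :=
  [set T : {set Omega} | #|T| == k].

Definition prob_vec (R : numDomainType) (Omega : finType) (P : Omega -> R) : Prop :=
  (forall x, 0 <= P x) /\ \sum_(x : Omega) P x = 1.

(* phi is decomposable on the information resources in B: there is a family of
   probability vectors P_F (depending on F only, not on the target) with
   phi(T,F) = t^T P_F = sum_{x in T} P_F(x). *)
Definition decomposable (R : numDomainType) (Omega : finType)
    (B : seq bitstring) (phi : {set Omega} -> bitstring -> R) : Prop :=
  exists P : bitstring -> Omega -> R,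
    forall F, F \in B ->
      prob_vec (P F) /\ forall T : {set Omega}, phi T F = \sum_(x in T) P F x.

Definition pairsR (Omega : finType) (k : nat) (B : seq bitstring)
    : seq ({set Omega} * bitstring) :=
  [seq (T, F) | T <- enum (tau Omega k), F <- B].

Definition pairsRq (R : numDomainType) (Omega : finType) (k : nat)
    (B : seq bitstring) (phi : {set Omega} -> bitstring -> R) (qmin : R)
    : seq ({set Omega} * bitstring) :=
  [seq TF <- pairsR Omega k B | qmin <= phi TF.1 TF.2].

From HB Require Import structures.
From mathcomp Require Import all_boot all_order all_algebra.
From mathcomp Require Import perm.
Import Order.TTheory GRing.Theory Num.Theory.
Local Open Scope ring_scope.
Set Implicit Arguments. Unset Strict Implicit.

(* By symmetry every point of [Omega] lies in the same number of k-subsets,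
   namely k |tau_k| / |Omega|.  Hence for each information resource F the
   decomposable metric phi(., F) sums over tau_k to |tau_k| k / |Omega|, so
   the average of phi over R is p.  Markov's inequality bounds the fraction
   of pairs with phi >= qmin by p / qmin. *)

Section KSubsets.

Variables (Omega : finType) (k : nat).

Lemma card_tau_mem_le (x y : Omega) :
  (#|[set T in tau Omega k | x \in T]| <= #|[set T in tau Omega k | y \in T]|)%N.
Proof.
rewrite -(card_imset _ (imset_inj (@perm_inj _ (tperm x y)))).
apply/subset_leq_card/subsetP => U /imsetP [T]; rewrite !inE => /andP [kT xT] ->.
rewrite card_imset ?kT; last exact: perm_inj.
by apply/imsetP; exists x; rewrite // tpermL.
Qed.

Lemma card_tau_mem_const (x y : Omega) :
  #|[set T in tau Omega k | x \in T]| = #|[set T in tau Omega k | y \in T]|.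
Proof. by apply/eqP; rewrite eqn_leq !card_tau_mem_le. Qed.

Lemma sum_card_tau_mem :
  (\sum_(x : Omega) #|[set T in tau Omega k | x \in T]| = k * #|tau Omega k|)%N.
Proof.
transitivity (\sum_(x : Omega) \sum_(T in tau Omega k) (x \in T : nat))%N.
  apply: eq_bigr => x _; rewrite -sum1_card big_mkcond [RHS]big_mkcond /=.
  by apply: eq_bigr => T _; rewrite inE; case: (T \in tau Omega k); case: (x \in T).
rewrite exchange_big /= mulnC -sum_nat_const; apply: eq_bigr => T; rewrite inE => /eqP <-.
by rewrite -sum1_card [RHS]big_mkcond; apply: eq_bigr => x _; case: (x \in T).
Qed.

Lemma card_tau_mem (x : Omega) :
  (#|Omega| * #|[set T in tau Omega k | x \in T]| = k * #|tau Omega k|)%N.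
Proof.
rewrite -sum_card_tau_mem -sum_nat_const.
by apply: eq_bigr => y _; apply: card_tau_mem_const.
Qed.

Lemma sum_tau_prob_vec (R : numFieldType) (P : Omega -> R) :
  prob_vec P ->
  \sum_(T in tau Omega k) \sum_(x in T) P x
    = #|tau Omega k|%:R * (k%:R / #|Omega|%:R).
Proof.
move=> [_ sumP1]; set c := (X in _ = X).
have card_mem x : #|[set T in tau Omega k | x \in T]|%:R = c.
  have n_gt0 : (0 < #|Omega|)%N by apply/card_gt0P; exists x.
  rewrite /c mulrA -natrM mulnC -(card_tau_mem x) natrM mulrAC.
  by rewrite divff ?pnatr_eq0 -?lt0n // mul1r.
rewrite (exchange_big_dep predT) //= -(mul1r c) -sumP1 mulr_suml.
apply: eq_bigr => x _; rewrite sumr_const -mulr_natr -(card_mem x).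
by congr (_ * _); congr _%:R; apply: eq_card => T; rewrite inE.
Qed.

End KSubsets.

Lemma ler_mul_count_sum (R : numDomainType) (I : eqType) (s : seq I)
    (f : I -> R) (q : R) :
  {in s, forall i, 0 <= f i} ->
  q * (count (fun i => q <= f i) s)%:R <= \sum_(i <- s) f i.
Proof.
move=> f_ge0; rewrite -sum1_count natr_sum mulr_sumr big_mkcond /=.
rewrite big_seq [X in _ <= X]big_seq; apply: ler_sum => i /f_ge0 fi_ge0.
by case: ifP => // qfi; rewrite mulr1.
Qed.

Section Decomposable.

Variables (R : numFieldType) (Omega : finType) (k : nat).
Variables (B : seq bitstring) (phi : {set Omega} -> bitstring -> R).
Hypothesis phi_dec : decomposable B phi.

Lemma phi_pairsR_ge0 :
  {in pairsR Omega k B, forall TF, 0 <= phi TF.1 TF.2}.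
Proof.
case: phi_dec => P dec _ /allpairsP [[T F] [_ /= FB ->]] /=.
by have [[P_ge0 _] ->] := dec F FB; apply: sumr_ge0.
Qed.

Lemma sum_phi_pairsR :
  \sum_(TF <- pairsR Omega k B) phi TF.1 TF.2
    = (size (pairsR Omega k B))%:R * (k%:R / #|Omega|%:R).
Proof.
case: phi_dec => P dec.
rewrite big_allpairs exchange_big /= size_allpairs -cardE natrM mulrAC.
rewrite -sum1_size natr_sum mulr_sumr !big_seq; apply: eq_bigr => F /dec [PF phiF].
by rewrite big_enum /= (eq_bigr _ (fun T _ => phiF T)) sum_tau_prob_vec // mulr1.
Qed.

End Decomposable.

Theorem theorem4 (R : realFieldType) (Omega : finType) (k m : nat)
    (B : seq bitstring) (phi : {set Omega} -> bitstring -> R) (qmin : R) :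
  uniq B ->
  (forall F, F \in B -> (size F <= m)%N) ->
  decomposable B phi ->
  0 < qmin -> qmin <= 1 ->
  (size (@pairsRq R Omega k B phi qmin))%:R / (size (@pairsR Omega k B))%:R
    <= ((k%:R / #|Omega|%:R) : R) / qmin.
Proof.
move=> _ _ phi_dec qmin_gt0 _; rewrite /pairsRq size_filter.
have := ler_mul_count_sum qmin (@phi_pairsR_ge0 _ _ k _ _ phi_dec).
rewrite (sum_phi_pairsR k phi_dec).
set N := size _; set p := k%:R / _ => markov.
have p_ge0 : 0 <= p by rewrite divr_ge0.
have [->|N_gt0] := posnP N; first by rewrite invr0 mulr0 divr_ge0 // ltW.
by rewrite ler_pdivlMr // mulrAC ler_pdivrMr ?ltr0n // mulrC [p * _]mulrC.
Qed.
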